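(* Let $X$, $Y$, $Z$ be random variables with values in $\mathcal{X}$, $\mathcal{Y}$, $\mathcal{Z}$ and joint distribution $P_{X,Y,Z}$. Then $$\mathrm{Weak\text{-}MI}(X;Y|Z)\le \mathrm{MI}(X;Y|Z).$$
   Context: $D_{\mathrm{KL}}$ denotes the Kullback–Leibler divergence. $\mathbb{E}_{P_Z}[P_{X|Z}P_{Y|Z}]$ denotes the mixture measure on $\mathcal{X}\times\mathcal{Y}$ given by $\int P_{X|Z=z}\otimes P_{Y|Z=z}\,dP_Z(z)$, where $P_{X|Z=z}$, $P_{Y|Z=z}$ are conditional distributions and $P_Z$ is the marginal of $Z$. The weak-conditional mutual information is $\mathrm{Weak\text{-}MI}(X;Y|Z):=D_{\mathrm{KL}}\big(P_{X,Y}\,\|\,\mathbb{E}_{P_Z}[P_{X|Z}P_{Y|Z}]\big)$, and the conditional mutual information is $\mathrm{MI}(X;Y|Z):=\mathbb{E}_{z\sim P_Z}\big[D_{\mathrm{KL}}(P_{X,Y|Z=z}\,\|\,P_{X|Z=z}P_{Y|Z=z})\big]$. *)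

From HB Require Import structures.
From mathcomp Require Import all_boot all_order all_algebra.
From mathcomp Require Import all_classical all_reals all_analysis.
From mathcomp Require Import measurable_realfun.
Set Implicit Arguments. Unset Strict Implicit. Unset Printing Implicit Defensive.
Import Order.TTheory GRing.Theory Num.Theory.
Local Open Scope classical_set_scope.
Local Open Scope ring_scope.
Local Open Scope ereal_scope.

Section KL.
Context d (T : measurableType d) (R : realType).

Definition is_density (P Q : set T -> \bar R) (f : T -> R) : Prop :=
  [/\ measurable_fun setT f, (forall x, (0 <= f x)%R) &
      forall A, measurable A -> P A = \int[Q]_(x in A) (f x)%:E].

(* Kullback-Leibler divergence: D(P||Q) = \int log (dP/dQ) dP if P << Q
   (i.e. a density dP/dQ exists), and +oo otherwise. *)
Definition KL (P Q : set T -> \bar R) : \bar R :=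
  match pselect (exists f, is_density P Q f) with
  | left h => \int[P]_x (ln (projT1 (cid h) x))%:E
  | right _ => +oo
  end.
End KL.

Section MI.
Context dX dY dZ (X : measurableType dX) (Y : measurableType dY)
  (Z : measurableType dZ) (R : realType).

(* joint law P_{X,Y,Z} on (X * Y) * Z, and a version K of the conditional
   distribution P_{X,Y | Z} (a probability kernel from Z to X * Y) *)
Variables (P : set ((X * Y) * Z) -> \bar R) (K : Z -> {measure set (X * Y) -> \bar R}).

Definition PXY : set (X * Y) -> \bar R := pushforward P fst.
Definition PZ : set Z -> \bar R := pushforward P snd.
Definition PX_Z (z : Z) : set X -> \bar R := pushforward (K z) fst.
Definition PY_Z (z : Z) : set Y -> \bar R := pushforward (K z) snd.

Definition mixture : set (X * Y) -> \bar R :=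
  fun A => \int[PZ]_z ((PX_Z z \x PY_Z z) A).

Definition weak_MI : \bar R := KL PXY mixture.

Definition cond_KL (z : Z) : \bar R := KL (K z) (PX_Z z \x PY_Z z).

Definition cond_MI : \bar R := \int[PZ]_z cond_KL z.

Definition is_cond_distr : Prop :=
  forall A, measurable A -> P A = \int[PZ]_z K z (ysection A z).
End MI.

(* Let f be a density of P_XY with respect to the mixture M = E_{P_Z}[Q_z], where
   Q_z = P_{X|Z=z} P_{Y|Z=z}.  For P_Z-almost every z, the variational (Gibbs) inequality
     E_{P_{XY|Z=z}}[ln f] <= D(P_{XY|Z=z} || Q_z) + E_{Q_z}[f] - 1
   holds.  Integrating it against P_Z turns the left-hand side into E_{P_XY}[ln f],
   which is Weak-MI, and the last expectation into E_M[f] = 1, leaving Weak-MI <= MI.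
   The logarithms are split into positive and negative parts so that no oo - oo
   arises.  If P_XY has no density with respect to M then MI = oo: otherwise
   D(P_{XY|Z=z} || Q_z) < oo, hence P_{XY|Z=z} << Q_z, for almost every z, so
   P_XY << M and the Radon-Nikodym theorem would provide a density. *)

From HB Require Import structures.
From mathcomp Require Import all_boot all_order all_algebra.
From mathcomp Require Import all_classical all_reals all_analysis.
From mathcomp Require Import measurable_realfun.
From mathcomp Require Import lra.
Set Implicit Arguments. Unset Strict Implicit. Unset Printing Implicit Defensive.
Import Order.TTheory GRing.Theory Num.Theory.
Local Open Scope ring_scope.

Section ln_inequalities.
Context (R : realType).
Implicit Types a b t : R.

Lemma ln_le_subr1 t : 0 < t -> ln t <= t - 1.
Proof.
by move=> t0; have := @le_ln1Dx R (t - 1); rewrite addrCA subrr addr0; apply; lra.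
Qed.

Lemma maxr0_subN t : Num.max t 0 - Num.max (- t) 0 = t.
Proof. by rewrite -{2}oppr0 -oppr_min opprK addr_max_min addr0. Qed.

Lemma ln_parts_le a b : 0 < a -> 0 < b ->
  Num.max (ln a) 0 + Num.max (- ln b) 0 + 1 <=
  Num.max (- ln a) 0 + Num.max (ln b) 0 + a / b.
Proof.
move=> a0 b0; have := maxr0_subN (ln a); have := maxr0_subN (ln b).
have : ln a - ln b <= a / b - 1.
  by rewrite -ln_div ?posrE//; apply: ln_le_subr1; rewrite divr_gt0.
lra.
Qed.

Lemma mulr_lnN_le1 b : 0 <= b -> b * Num.max (- ln b) 0 <= 1.
Proof.
rewrite le_eqVlt => /predU1P[<-|b0]; first by rewrite mul0r.
have : Num.max (- ln b) 0 <= b^-1.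
  rewrite ge_max invr_ge0 (ltW b0) andbT -lnV ?posrE//.
  by rewrite (le_trans (ln_le_subr1 _)) ?invr_gt0// lerBlDr lerDl.
by rewrite -(ler_pM2l b0) mulfV ?gt_eqF.
Qed.

End ln_inequalities.

Local Open Scope classical_set_scope.
Local Open Scope ereal_scope.

Lemma measurable_EFin_ln d (T : measurableType d) (R : realType) (h : T -> R) :
  measurable_fun [set: T] h -> measurable_fun [set: T] (fun x => (ln (h x))%:E).
Proof.
by move=> mh; apply/measurable_EFinP/measurableT_comp => //; exact: measurable_ln.
Qed.

Lemma ge0_integralD3 d (T : measurableType d) (R : realType)
    (mu : {measure set T -> \bar R}) (f g h : T -> \bar R) :
    (forall x, 0 <= f x) -> (forall x, 0 <= g x) -> (forall x, 0 <= h x) ->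
    measurable_fun [set: T] f -> measurable_fun [set: T] g ->
    measurable_fun [set: T] h ->
  \int[mu]_x (f x + g x + h x) = \int[mu]_x f x + \int[mu]_x g x + \int[mu]_x h x.
Proof.
move=> f0 g0 h0 mf mg mh.
rewrite ge0_integralD//; last 2 first.
- by move=> x _; rewrite adde_ge0.
- exact: emeasurable_funD.
by rewrite ge0_integralD.
Qed.

Lemma le_integral_funeposneg d (T : measurableType d) (R : realType)
    (mu : {measure set T -> \bar R}) (f : T -> \bar R) (c : \bar R) :
  \int[mu]_x f^\+ x <= \int[mu]_x f^\- x + c -> \int[mu]_x f x <= c.
Proof.
have fn0 : 0 <= \int[mu]_x f^\- x by apply: integral_ge0 => x _; exact: funeneg_ge0.
move=> fpn; rewrite (integralE _ _ f).
have [fnfin|] := boolP (\int[mu]_x f^\- x \is a fin_num); first by rewrite leeBlDl.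
by rewrite ge0_fin_numE// -leNgt leye_eq => /eqP ->; rewrite addeNy leNye.
Qed.

Lemma ae_gt0 d (T : measurableType d) (R : realType) (mu : {measure set T -> \bar R})
    (h : T -> R) : measurable_fun [set: T] h ->
  mu (h @^-1` [set 0%R]) = 0 -> (forall x, 0 <= h x)%R -> {ae mu, forall x, 0 < h x}%R.
Proof.
move=> mh muh0 h0; exists (h @^-1` [set 0%R]); split => //.
  by rewrite -[X in measurable X]setTI; exact: mh.
by move=> x /= /negP; rewrite lt_def h0 andbT negbK => /eqP.
Qed.

Lemma ge0_integral_neqy_ae d (T : measurableType d) (R : realType)
    (mu : {measure set T -> \bar R}) (h : T -> \bar R) :
  measurable_fun [set: T] h -> (forall x, 0 <= h x) ->
  \int[mu]_x h x != +oo -> {ae mu, forall x, h x != +oo}.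
Proof.
move=> mh h0 hfin; have hint : mu.-integrable [set: T] h.
  apply/integrableP; split => //; under eq_integral do rewrite gee0_abs//.
  by rewrite ltey.
by apply: filterS (integrable_ae measurableT hint) => x /(_ I) /fin_numP[].
Qed.

Section density.
Context d (T : measurableType d) (R : realType).

Lemma is_density_dominates (P Q : {measure set T -> \bar R}) g :
  is_density P Q g -> P `<< Q.
Proof.
move=> [mg _ PE]; apply/null_content_dominatesP => A mA QA0.
by rewrite PE//; apply: null_set_integral => //; exact/measurable_EFinP/measurable_funTS.
Qed.

Variables (P : {finite_measure set T -> \bar R})
  (Q : {sigma_finite_measure set T -> \bar R}).

Lemma dominates_is_density : P `<< Q -> exists g, is_density P Q g.
Proof.
move=> PQ; have [g [g0 gfin gint gE]] := radon_nikodym_sigma_finite PQ.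
exists (fine \o g); split => [|x|A mA].
- exact: measurableT_comp (measurable_int _ gint).
- exact: fine_ge0.
- by rewrite gE//; apply: eq_integral => x _; rewrite /= fineK.
Qed.

Lemma ge0_integral_density g f : is_density P Q g ->
    (forall x, 0 <= f x) -> measurable_fun [set: T] f ->
  \int[P]_x f x = \int[Q]_x ((g x)%:E * f x).
Proof.
move=> hg f0 mf; have PQ := is_density_dominates hg; have [mg g0 PE] := hg.
rewrite -(Radon_Nikodym_SigmaFinite.change_of_variables PQ)//.
have mRN := measurable_int _ (Radon_Nikodym_SigmaFinite.f_integrable PQ).
apply: ae_eq_integral => //.
- exact: emeasurable_funM.
- by apply: emeasurable_funM => //; exact/measurable_EFinP.
have gRN : ae_eq Q setT (Radon_Nikodym_SigmaFinite.f P Q) (EFin \o g).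
  apply: integral_ae_eq => //.
  - exact: Radon_Nikodym_SigmaFinite.f_integrable.
  - exact/measurable_EFinP.
  - by move=> E _ mE; rewrite -Radon_Nikodym_SigmaFinite.f_integral// PE.
by apply: filterS gRN => x /= gx /gx ->; rewrite muleC.
Qed.

End density.

Lemma KL_dominates d (T : measurableType d) (R : realType)
    (P Q : {measure set T -> \bar R}) :
  KL P Q != +oo -> P `<< Q.
Proof.
rewrite /KL; case: pselect => [[g hg] _|_]; last by rewrite eqxx.
exact: is_density_dominates hg.
Qed.

Section mixture.
Context d d' (Z : measurableType d) (W : measurableType d') (R : realType).
Variable mu : probability Z R.

(* The composition of the constant kernel [mu], on the one-point space, with [k]. *)
Definition mixture_measure (k : R.-spker Z ~> W) : {measure set W -> \bar R} :=
  (kprobability (measurable_cst (mu : pprobability Z R) : measurable_fun [set: unit] _)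
   \; kernel.kernel_snd k) tt.

Variables (k : R.-spker Z ~> W) (nu : {measure set W -> \bar R}).
Hypothesis nuE : forall A, measurable A -> nu A = \int[mu]_z k z A.

Lemma ge0_integral_mixture f : (forall w, 0 <= f w) -> measurable_fun [set: W] f ->
  \int[nu]_w f w = \int[mu]_z \int[k z]_w f w.
Proof.
move=> f0 mf; rewrite (eq_measure_integral (mixture_measure k)) => [|A mA _].
  exact: integral_kcomp.
by rewrite nuE.
Qed.

Lemma mixture_null_ae A : measurable A -> nu A = 0 -> {ae mu, forall z, k z A = 0}.
Proof.
move=> mA nuA0; have : \int[mu]_z `|k z A| = 0.
  by rewrite -nuA0 nuE//; apply: eq_integral => z _; rewrite gee0_abs.
move/ae_eq_integral_abs => /(_ measurableT (measurable_kernel k _ mA)).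
by apply: filterS => z /(_ I).
Qed.

Lemma dominates_mixture (k' : R.-spker Z ~> W) (nu' : {measure set W -> \bar R}) :
    (forall A, measurable A -> nu' A = \int[mu]_z k' z A) ->
  {ae mu, forall z, k' z `<< k z} -> nu' `<< nu.
Proof.
move=> nu'E kk'; apply/null_content_dominatesP => A mA nuA0.
rewrite nu'E// (ae_eq_integral (cst 0))//; first by rewrite integral0.
- exact: measurable_kernel.
- apply: filterS2 (mixture_null_ae mA nuA0) kk' => z kA0 /null_content_dominatesP.
  by move=> /(_ A mA kA0).
Qed.

End mixture.

Section KL_variational.
Context d (T : measurableType d) (R : realType).
Variables (P Q : probability T R).

Section density_case.
Variables (g f : T -> R).
Hypotheses (hg : is_density P Q g) (mf : measurable_fun [set: T] f)
  (f0 : forall x, (0 <= f x)%R) (Pf0 : P (f @^-1` [set 0%R]) = 0).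

Let mg : measurable_fun [set: T] g. Proof. by case: hg. Qed.
Let g0 x : (0 <= g x)%R. Proof. by case: hg. Qed.

(* [expR (- ln b)] is [b^-1] for [b > 0], and is measurable in [b] as a composite of
   measurable functions. *)
Let measurable_ratio :
  measurable_fun [set: T] (fun x => (f x * expR (- ln (g x)))%:E).
Proof.
apply/measurable_EFinP/measurable_funM => //.
apply: measurableT_comp; first exact: measurable_expR.
by apply: measurableT_comp => //; apply: measurableT_comp => //; exact: measurable_ln.
Qed.

Lemma integral_ratio_density_le :
  \int[P]_x (f x * expR (- ln (g x)))%:E <= \int[Q]_x (f x)%:E.
Proof.
have mr := (measurable_EFinP _ _).1 measurable_ratio.
rewrite (ge0_integral_density hg) => [|x|]; first last.
- exact/measurable_EFinP.
- by rewrite lee_fin mulr_ge0// expR_ge0.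
apply: ge0_le_integral => //.
- by move=> x _; rewrite -EFinM lee_fin !mulr_ge0// expR_ge0.
- exact: emeasurable_funM ((measurable_EFinP _ _).2 mg) ((measurable_EFinP _ _).2 mr).
- exact/measurable_EFinP.
- move=> x _; rewrite -EFinM lee_fin mulrCA.
  have [->|gx0] := eqVneq (g x) 0%R; first by rewrite mul0r mulr0.
  have gx : (0 < g x)%R by rewrite lt_def gx0 g0.
  by rewrite expRN lnK ?posrE// mulfV// mulr1.
Qed.

Lemma integral_lnN_density_le :
  \int[P]_x (fun x => (ln (g x))%:E)^\- x <= Q setT.
Proof.
rewrite (ge0_integral_density hg) => [|x|]; first last.
- exact/measurable_funeneg/measurable_EFin_ln.
- exact: funeneg_ge0.
rewrite -[leRHS]mul1e -integral_cst//; apply: ge0_le_integral => //.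
- by move=> x _; rewrite mule_ge0 ?lee_fin ?funeneg_ge0.
- apply: emeasurable_funM; first exact/measurable_EFinP.
  exact/measurable_funeneg/measurable_EFin_ln.
- move=> x _; rewrite funenegE -EFinN -EFin_max -EFinM lee_fin.
  exact: mulr_lnN_le1.
Qed.

Lemma integral_ln_parts_density_le :
  \int[P]_x (fun x => (ln (f x))%:E)^\+ x + 1 <=
  \int[P]_x (fun x => (ln (f x))%:E)^\- x + \int[P]_x (ln (g x))%:E +
  \int[Q]_x (f x)%:E.
Proof.
set u := fun x => (ln (f x))%:E; set v := fun x => (ln (g x))%:E.
set r := fun x => (f x * expR (- ln (g x)))%:E.
have [mup mun] := (measurable_funepos (measurable_EFin_ln mf),
  measurable_funeneg (measurable_EFin_ln mf)).
have [mvp mvn] := (measurable_funepos (measurable_EFin_ln mg),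
  measurable_funeneg (measurable_EFin_ln mg)).
have r0 x : 0 <= r x by rewrite lee_fin mulr_ge0// expR_ge0.
have Pg0 : P (g @^-1` [set 0%R]) = 0.
  case: hg => _ _ ->; last by rewrite -[X in measurable X]setTI; exact: mg.
  by apply: integral0_eq => x /= ->.
have parts : \int[P]_x u^\+ x + \int[P]_x v^\- x + 1 <=
    \int[P]_x u^\- x + \int[P]_x v^\+ x + \int[P]_x r x.
  have P1 : \int[P]_x 1 = 1 by rewrite integral_cst// mul1e; exact: probability_setT.
  rewrite -P1 -!ge0_integralD3//.
  apply: ae_ge0_le_integral => //.
  - by move=> x _; rewrite !adde_ge0.
  - by apply: emeasurable_funD => //; exact: emeasurable_funD.
  - by move=> x _; rewrite !adde_ge0.
  - by apply: emeasurable_funD; [exact: emeasurable_funD|exact: measurable_ratio].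
  apply: filterS2 (ae_gt0 mf Pf0 f0) (ae_gt0 mg Pg0 g0) => x fx gx _.
  rewrite !funeposE !funenegE -!EFinN -!EFin_max -!EFinD lee_fin.
  by rewrite expRN lnK ?posrE//; exact: ln_parts_le.
have vnfin : \int[P]_x v^\- x \is a fin_num.
  rewrite ge0_fin_numE; last by apply: integral_ge0 => x _; exact: funeneg_ge0.
  by rewrite (le_lt_trans integral_lnN_density_le)// ltey_eq fin_num_measure.
rewrite (integralE _ _ v) addeA (addeAC _ (- _)) leeBrDr// [leLHS]addeAC.
exact: le_trans parts (leeD2l _ integral_ratio_density_le).
Qed.

End density_case.

Lemma KL_variational (f : T -> R) : measurable_fun [set: T] f ->
    (forall x, 0 <= f x)%R -> P (f @^-1` [set 0%R]) = 0 ->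
  \int[P]_x (fun x => (ln (f x))%:E)^\+ x + 1 <=
  \int[P]_x (fun x => (ln (f x))%:E)^\- x + KL P Q + \int[Q]_x (f x)%:E.
Proof.
move=> mf f0 Pf0; rewrite /KL; case: pselect => [h|_].
  by case: cid => g hg /=; exact: integral_ln_parts_density_le.
rewrite addey ?addye ?leey// gt_eqF// (lt_le_trans ltNy0)//.
  by apply: integral_ge0 => x _; rewrite lee_fin.
by apply: integral_ge0 => x _; exact: funeneg_ge0.
Qed.

Lemma KL_ge0 : 0 <= KL P Q.
Proof.
have := @KL_variational (fun _ => 1%R) (measurable_cst _) (fun _ => ler01).
rewrite preimage_cst ifF ?measure0; last first.
  by apply/negbTE/negP; rewrite inE/= => /eqP; rewrite oner_eq0.
have -> : (fun _ : T => (ln (1 : R))%:E)^\+ = cst 0.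
  by apply/funext => x; rewrite funeposE ln1 maxxx.
have -> : (fun _ : T => (ln (1 : R))%:E)^\- = cst 0.
  by apply/funext => x; rewrite funenegE ln1 oppe0 maxxx.
have Q1 : \int[Q]_x 1 = 1 by rewrite integral_cst// mul1e; exact: probability_setT.
by rewrite !integral0 !add0e Q1 -{1}(add0e 1) leeD2rE// => /(_ erefl).
Qed.

End KL_variational.

Lemma pushforward_setT d d' (T1 : measurableType d) (T2 : measurableType d')
    (R : realType) (m : set T1 -> \bar R) (f : T1 -> T2) :
  pushforward m f setT = m setT.
Proof. by rewrite /pushforward preimage_setT. Qed.

(* The library's measure structure on [pushforward m f], which takes the measurability
   of [f] as an explicit argument. *)
Local Notation pushforward_measure :=
  measure_function_pushforward__canonical__measure_function_Measure.

Section conditional_marginals.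
Context (R : realType) (dX dY dZ : measure_display) (X : measurableType dX)
  (Y : measurableType dY) (Z : measurableType dZ) (K : R.-pker Z ~> (X * Y)%type).

(* [K z] under a name that can carry a probability structure. *)
Definition PXY_Z (z : Z) : set (X * Y) -> \bar R := K z.

HB.instance Definition _ z := Measure.copy (PXY_Z z) (K z).
HB.instance Definition _ z :=
  Measure_isProbability.Build _ _ _ (PXY_Z z) (@prob_kernel _ _ _ _ _ K z).

HB.instance Definition _ z :=
  Measure.copy (PX_Z K z) (pushforward_measure (K z) measurable_fst).
HB.instance Definition _ z := Measure_isProbability.Build _ _ _ (PX_Z K z)
  (etrans (pushforward_setT _ _) (@prob_kernel _ _ _ _ _ K z)).
HB.instance Definition _ z :=
  Measure.copy (PY_Z K z) (pushforward_measure (K z) measurable_snd).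
HB.instance Definition _ z := Measure_isProbability.Build _ _ _ (PY_Z K z)
  (etrans (pushforward_setT _ _) (@prob_kernel _ _ _ _ _ K z)).

Definition kPX_Z : Z -> {measure set X -> \bar R} := PX_Z K.
Definition kPY_Z_fst : Z * X -> {measure set Y -> \bar R} := fun zx => PY_Z K zx.1.

Let measurable_kPX_Z U : measurable U -> measurable_fun [set: Z] (kPX_Z ^~ U).
Proof.
move=> mU; apply: (measurable_kernel K).
by rewrite -[X in measurable X]setTI; exact: measurable_fst.
Qed.

Let measurable_kPY_Z_fst U : measurable U -> measurable_fun [set: Z * X] (kPY_Z_fst ^~ U).
Proof.
move=> mU; apply: measurableT_comp (measurable_kernel K _ _) _ => //.
by rewrite -[X in measurable X]setTI; exact: measurable_snd.
Qed.

HB.instance Definition _ := isKernel.Build _ _ _ _ _ kPX_Z measurable_kPX_Z.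
HB.instance Definition _ := Kernel_isProbability.Build _ _ _ _ _ kPX_Z
  (fun z => probability_setT (PX_Z K z)).
HB.instance Definition _ := isKernel.Build _ _ _ _ _ kPY_Z_fst measurable_kPY_Z_fst.
HB.instance Definition _ := Kernel_isProbability.Build _ _ _ _ _ kPY_Z_fst
  (fun zx => probability_setT (PY_Z K zx.1)).

Lemma measurable_cond_prod A : measurable A ->
  measurable_fun [set: Z] (fun z => (PX_Z K z \x PY_Z K z) A).
Proof.
move=> mA; have := measurable_kproduct kPX_Z kPY_Z_fst mA.
congr measurable_fun; apply/funext => z; apply: eq_integral => x _.
by rewrite kernel.intker_indicE.
Qed.

Definition cond_prod : Z -> {measure set (X * Y) -> \bar R} :=
  fun z => PX_Z K z \x PY_Z K z.

HB.instance Definition _ := isKernel.Build _ _ _ _ _ cond_prod measurable_cond_prod.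
HB.instance Definition _ := Kernel_isProbability.Build _ _ _ _ _ cond_prod
  (fun z => probability_setT (cond_prod z)).

End conditional_marginals.

Section conditional_mutual_information.
Context (R : realType) (dX dY dZ : measure_display) (X : measurableType dX)
  (Y : measurableType dY) (Z : measurableType dZ)
  (P : probability ((X * Y) * Z)%type R) (K : R.-pker Z ~> (X * Y)%type).

HB.instance Definition _ := Measure.copy (PZ P) (pushforward_measure P measurable_snd).
HB.instance Definition _ := Measure_isProbability.Build _ _ _ (PZ P)
  (etrans (pushforward_setT _ _) (probability_setT P)).
HB.instance Definition _ := Measure.copy (PXY P) (pushforward_measure P measurable_fst).
HB.instance Definition _ := Measure_isProbability.Build _ _ _ (PXY P)
  (etrans (pushforward_setT _ _) (probability_setT P)).
HB.instance Definition _ :=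
  Measure.copy (mixture P K) (mixture_measure (PZ P) (cond_prod K)).

Let mixture_setT : mixture P K setT = 1.
Proof.
rewrite /mixture (eq_integral (fun _ => 1)) => [|z _]; last exact: probability_setT.
by rewrite integral_cst// mul1e; exact: probability_setT.
Qed.

HB.instance Definition _ := Measure_isProbability.Build _ _ _ (mixture P K) mixture_setT.

Lemma mixture_cond_prodE A : mixture P K A = \int[PZ P]_z cond_prod K z A.
Proof. by []. Qed.

Lemma cond_KL_ge0 z : 0 <= cond_KL K z.
Proof. exact: (@KL_ge0 _ _ _ (PXY_Z K z) (PX_Z K z \x PY_Z K z)). Qed.

Hypothesis hK : is_cond_distr P K.

Lemma PXY_mixtureE A : measurable A -> PXY P A = \int[PZ P]_z K z A.
Proof.
move=> mA; rewrite /PXY /pushforward hK; last first.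
  by rewrite -[X in measurable X]setTI; exact: measurable_fst.
by apply: eq_integral => z _; rewrite ysection_preimage_fst.
Qed.

Lemma ae_cond_KL_variational f : is_density (PXY P) (mixture P K) f ->
  {ae PZ P, forall z, \int[K z]_x (fun x => (ln (f x))%:E)^\+ x + 1 <=
    \int[K z]_x (fun x => (ln (f x))%:E)^\- x + cond_KL K z +
    \int[cond_prod K z]_x (f x)%:E}.
Proof.
move=> [mf f0 PE]; have mf0 : measurable (f @^-1` [set 0%R]).
  by rewrite -[X in measurable X]setTI; exact: mf.
have PXY_f0 : PXY P (f @^-1` [set 0%R]) = 0.
  by rewrite PE//; apply: integral0_eq => x /= ->.
apply: filterS (mixture_null_ae PXY_mixtureE mf0 PXY_f0) => z Kz0.
exact: (@KL_variational _ _ _ (PXY_Z K z) (PX_Z K z \x PY_Z K z)).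
Qed.

Hypothesis mcond_KL : measurable_fun [set: Z] (cond_KL K).

Lemma integral_ln_density_le_cond_MI f : is_density (PXY P) (mixture P K) f ->
  \int[PXY P]_x (ln (f x))%:E <= cond_MI P K.
Proof.
move=> hf; have [mf f0 PE] := hf; set u := fun x => (ln (f x))%:E.
have KL0 := cond_KL_ge0.
have [mup mun] := (measurable_funepos (measurable_EFin_ln mf),
  measurable_funeneg (measurable_EFin_ln mf)).
have mK (h : X * Y -> \bar R) : (forall x, 0 <= h x) -> measurable_fun [set: X * Y] h ->
    measurable_fun [set: Z] (fun z => \int[K z]_x h x).
  by move=> h0 mh; apply: measurable_fun_integral_kernel => //; exact: measurable_kernel.
have mKp := mK _ (funepos_ge0 u) mup; have mKn := mK _ (funeneg_ge0 u) mun.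
have mfE : measurable_fun [set: X * Y] (EFin \o f) by exact/measurable_EFinP.
have mQ : measurable_fun [set: Z] (fun z => \int[cond_prod K z]_x (f x)%:E).
  by apply: measurable_fun_integral_kernel => //; exact: measurable_kernel.
have uK0 z : 0 <= \int[K z]_x u^\+ x by apply: integral_ge0 => x _; exact: funepos_ge0.
have uK1 z : 0 <= \int[K z]_x u^\- x by apply: integral_ge0 => x _; exact: funeneg_ge0.
have fQ0 z : 0 <= \int[cond_prod K z]_x (f x)%:E.
  by apply: integral_ge0 => x _; rewrite lee_fin.
have : \int[PZ P]_z (\int[K z]_x u^\+ x + 1) <=
    \int[PZ P]_z (\int[K z]_x u^\- x + cond_KL K z + \int[cond_prod K z]_x (f x)%:E).
  apply: ae_ge0_le_integral => //.
  - by move=> z _; rewrite adde_ge0 ?uK0.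
  - exact: emeasurable_funD.
  - by move=> z _; rewrite adde_ge0 ?fQ0// adde_ge0 ?uK1 ?KL0.
  - by apply: emeasurable_funD => //; exact: emeasurable_funD.
  - by apply: filterS (ae_cond_KL_variational hf) => z + _.
have PZ1 : \int[PZ P]_z 1 = 1 by rewrite integral_cst// mul1e; exact: probability_setT.
have mixture_f : \int[mixture P K]_x (f x)%:E = 1.
  by rewrite -PE// -(probability_setT (PXY P)).
rewrite [X in X <= _]ge0_integralD// ge0_integralD3//.
rewrite -!(ge0_integral_mixture PXY_mixtureE)//.
rewrite -(ge0_integral_mixture (fun A _ => mixture_cond_prodE A))//.
by rewrite PZ1 mixture_f leeD2rE//; exact: le_integral_funeposneg.
Qed.

End conditional_mutual_information.

Unset Implicit Arguments. Set Strict Implicit.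

Theorem propositionA6 (R : realType) (dX dY dZ : measure_display)
  (X : measurableType dX) (Y : measurableType dY) (Z : measurableType dZ)
  (P : probability ((X * Y) * Z)%type R) (K : R.-pker Z ~> (X * Y)%type)
  (hK : is_cond_distr P K)
  (hmeas : measurable_fun [set: Z] (cond_KL K)) :
  weak_MI P K <= cond_MI P K.
Proof.
rewrite /weak_MI /KL; case: pselect => [h|no_density].
  by case: cid => f /=; exact: integral_ln_density_le_cond_MI.
have [->//|MI_fin] := eqVneq (cond_MI P K) +oo.
exfalso; apply/no_density/dominates_is_density.
apply: (dominates_mixture (k := cond_prod K) (nu := mixture P K)
  (fun A _ => mixture_cond_prodE P K A) (PXY_mixtureE hK)).
apply: filterS (ge0_integral_neqy_ae hmeas (cond_KL_ge0 K) MI_fin) => z.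
exact: KL_dominates.
Qed.
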